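(* $A_4(11,8)\le 60$.
   Context: For an integer $q\ge2$ let $[q]=\{0,1,\dots,q-1\}$. The Hamming distance between $u,v\in[q]^n$ is the number of coordinates in which they differ; $A_q(n,d)$ is the maximum cardinality of a code $C\subseteq[q]^n$ in which any two distinct codewords have Hamming distance at least $d$. *)

From mathcomp Require Import all_boot.
Set Implicit Arguments. Unset Strict Implicit. Unset Printing Implicit Defensive.

Definition word (q n : nat) := {ffun 'I_n -> 'I_q}.

Definition hamming (q n : nat) (u v : word q n) : nat := #|[set i | u i != v i]|.

Definition min_dist_ge (q n d : nat) (C : {set word q n}) : bool :=
  [forall u in C, forall v in C, (u != v) ==> (d <= hamming u v)].

Definition A (q n d : nat) : nat :=
  \max_(C : {set word q n} | min_dist_ge d C) #|C|.

From mathcomp Require Import all_boot zify.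

(* A_4(11,8) <= 60.  Distinct codewords of a code of length 11 and minimum
   distance 8 agree in at most 3 coordinates.  Double counting agreements in a
   set U of codewords gives  sum_j sum_b |U_{j,b}|^2 + slack U = |U|(3|U| + 8)
   (pair_count), where U_{j,b} is the slice of words with symbol b at
   coordinate j and the slack sums the defects 3 - agree x y.  Bounding sums of
   squares below (Cauchy-Schwarz, u^2 + 12 >= 7u) shows that slices have at
   most 16 words, that slices of size 15 or 16 have no slack, and that a
   16-slice splits into four blocks of 4 along every other coordinate.
   In a 61-word code, a 16-slice at each coordinate forces all words but one
   to have a partner agreeing with them once or twice; such pairs lie in
   slices of size <= 14, whose slacks therefore total at least 60.  Per
   coordinate these slacks are at most 4, or 18 - 6a at the a "thin"
   coordinates with slice profile 16,16,16,13; summing gives a contradiction.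
   A larger code contains a 61-word subcode. *)

Set Implicit Arguments.
Unset Strict Implicit.
Unset Printing Implicit Defensive.

Lemma sum_sq_le (I : finType) (u : I -> nat) :
  (\sum_i u i) * (\sum_i u i) <= #|I| * \sum_i u i * u i.
Proof.
rewrite -(leq_pmul2l (isT : 0 < 2)).
have -> : 2 * (#|I| * \sum_i u i * u i) = \sum_i \sum_j (u i * u i + u j * u j).
  rewrite [RHS](eq_bigr (fun i => #|I| * (u i * u i) + \sum_j u j * u j)); last first.
    by move=> i _; rewrite big_split /= sum_nat_const.
  by rewrite big_split /= sum_nat_const -big_distrr /= (@eq_card _ _ I) //; lia.
rewrite big_distrlr big_distrr; apply: leq_sum => i _.
by rewrite big_distrr; apply: leq_sum => j _; exact: (nat_Cauchy (u i) (u j)).1.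
Qed.

Lemma sq_tangent u : 7 * u <= u * u + 12 ?= iff (3 <= u <= 4).
Proof.
case: (ltnP u 5) => [|u_ge5]; first by case: u => [|[|[|[|[|]]]]].
have lt : 7 * u < u * u + 12 by nia.
by split; [exact: ltnW | rewrite ltn_eqF // (leqNgt u 4) u_ge5 andbF].
Qed.

Lemma eq_of_sum_le (I : finType) (P : pred I) (F G : I -> nat) :
    (forall i, P i -> F i <= G i) -> \sum_(i | P i) G i <= \sum_(i | P i) F i ->
  forall i, P i -> F i = G i.
Proof.
move=> FG GF i Pi; have [le_FG eq_FG] := leqif_sum (fun k Pk => leqif_eq (FG k Pk)).
have /forall_inP /(_ i Pi) /eqP // : [forall (k | P k), F k == G k].
by rewrite -eq_FG eqn_leq le_FG GF.
Qed.

Lemma exists_gt (I : finType) (f : I -> nat) m : #|I| * m < \sum_i f i -> exists i, m < f i.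
Proof.
move=> h; apply/existsP; apply: contraLR h => /existsPn hf.
by rewrite -leqNgt -sum_nat_const; apply: leq_sum => i _; rewrite leqNgt hf.
Qed.

Section Agreement.

Variables q n : nat.
Implicit Types (x y : word q n) (S U C D : {set word q n}).

Definition agree x y : nat := \sum_(i < n) (x i == y i).

Definition slice S (j : 'I_n) (b : 'I_q) : {set word q n} := [set y in S | y j == b].

(* Sum of the squared slice sizes at coordinate j: the number of ordered
   pairs of words of S agreeing at j. *)
Definition sqsum S (j : 'I_n) : nat := \sum_(b < q) #|slice S j b| * #|slice S j b|.

Lemma agree_self x : agree x x = n.
Proof. by rewrite /agree (eq_bigr (fun _ => 1)) ?sum1_card ?card_ord // => i _; rewrite eqxx. Qed.

Lemma agree_hamming x y : agree x y + hamming x y = n.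
Proof.
rewrite /hamming -sum1_card big_mkcond /= /agree -big_split /=.
rewrite -[RHS]card_ord -sum1_card; apply: eq_bigr => i _.
by rewrite inE; case: (x i == y i).
Qed.

Lemma sum_by_slice S j (F : 'I_q -> word q n -> nat) :
  \sum_(x in S) F (x j) x = \sum_(b < q) \sum_(x in slice S j b) F b x.
Proof.
rewrite (partition_big (fun x => x j) predT) //=; apply: eq_bigr => b _.
rewrite [RHS]big_mkcond [LHS]big_mkcond; apply: eq_bigr => x _; rewrite inE.
by case: (x \in S) => //=; case: (x j =P b) => [->|].
Qed.

Lemma sum_card_slice S j : \sum_(b < q) #|slice S j b| = #|S|.
Proof.
rewrite -sum1_card (sum_by_slice S j (fun _ _ => 1)).
by apply: eq_bigr => b _; rewrite sum1_card.
Qed.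

Lemma sum_agree_row S x : \sum_(y in S) agree x y = \sum_(j < n) #|slice S j (x j)|.
Proof.
rewrite exchange_big; apply: eq_bigr => j _ /=.
rewrite (sum_by_slice S j (fun b _ => x j == b)) (bigD1 (x j)) //= [X in _ + X]big1.
  by rewrite addn0 sum_nat_const eqxx muln1.
by move=> b nb; rewrite big1 // => y _; rewrite eq_sym (negbTE nb).
Qed.

Lemma sum_agree_pairs U : \sum_(x in U) \sum_(y in U) agree x y = \sum_(j < n) sqsum U j.
Proof.
under eq_bigr do rewrite sum_agree_row.
rewrite exchange_big; apply: eq_bigr => j _ /=.
rewrite (sum_by_slice U j (fun b _ => #|slice U j b|)).
by apply: eq_bigr => b _; rewrite sum_nat_const.
Qed.

Lemma sqsum_tangent S j :
  7 * #|S| <= sqsum S j + 12 * q ?= iff [forall b, 3 <= #|slice S j b| <= 4].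
Proof.
have -> : 12 * q = \sum_(b < q) 12 by rewrite sum_nat_const card_ord mulnC.
rewrite -(sum_card_slice S j) big_distrr -big_split /=.
exact: leqif_sum (fun b _ => sq_tangent _).
Qed.

Lemma sqsum_ge S j : #|S| * #|S| <= q * sqsum S j.
Proof. by have := sum_sq_le (fun b : 'I_q => #|slice S j b|); rewrite card_ord sum_card_slice. Qed.

Lemma slice_sub S j b : slice S j b \subset S.
Proof. by apply/subsetP => y; rewrite inE => /andP []. Qed.

Lemma slice_comm S i a j b : slice (slice S i a) j b = slice (slice S j b) i a.
Proof. by apply/setP => y; rewrite !inE; case: (y \in S); case: (y i == a); case: (y j == b). Qed.

Lemma slice_same S i a b : slice (slice S i a) i b = if b == a then slice S i a else set0.
Proof.
apply/setP => y; case: (b =P a) => [->|nba]; rewrite !inE; first by rewrite -andbA andbb.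
case: (y i =P a) => [->|]; last by rewrite andbF.
by rewrite eq_sym (introF eqP nba) andbF.
Qed.

Lemma sqsum_slice_self S i a : sqsum (slice S i a) i = #|slice S i a| * #|slice S i a|.
Proof.
rewrite /sqsum (bigD1 a) //= slice_same eqxx big1 ?addn0 // => b nb.
by rewrite slice_same (negbTE nb) cards0.
Qed.

Lemma min_dist_ge_sub d C D : min_dist_ge d C -> D \subset C -> min_dist_ge d D.
Proof.
move=> /forall_inP hC /subsetP sub; apply/forall_inP => u uD; apply/forall_inP => v vD.
by have /forall_inP := hC u (sub u uD); apply; apply: sub.
Qed.

Lemma agree_le d C x y : min_dist_ge d C -> x \in C -> y \in C -> x != y -> agree x y <= n - d.
Proof.
move=> /forall_inP /(_ x) hC xC yC nxy.
have /forall_inP /(_ y yC) := hC xC; rewrite nxy /= => dxy.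
by have := agree_hamming x y; lia.
Qed.

Definition slack_row (t : nat) U x : nat := \sum_(y in U | y != x) (t - agree x y).

Definition slack (t : nat) U : nat := \sum_(x in U) slack_row t U x.

Lemma slack_term_le t U x y : x \in U -> y \in U -> y != x -> t - agree x y <= slack t U.
Proof.
move=> xU yU nyx; rewrite /slack (bigD1 x) //=; apply: leq_trans (leq_addr _ _).
by rewrite /slack_row (bigD1 y) /= ?yU ?nyx //; apply: leq_addr.
Qed.

Lemma pair_count d U : min_dist_ge d U ->
  \sum_(j < n) sqsum U j + slack (n - d) U = #|U| * (n + (n - d) * (#|U| - 1)).
Proof.
move=> hU; rewrite -sum_agree_pairs /slack -big_split -sum_nat_const /=.
apply: eq_bigr => x xU; rewrite (bigD1 x) //= agree_self -addnA; congr (_ + _).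
have -> : #|U| - 1 = #|[pred y in U | y != x]|.
  by rewrite (cardD1 x U) xU add1n subn1; apply: eq_card => y; rewrite !inE andbC.
rewrite mulnC -sum_nat_const -big_split /=; apply: eq_big => [y|y /andP [yU nyx]].
  by rewrite !inE andbC.
by rewrite subnKC // (agree_le hU) 1?eq_sym.
Qed.

End Agreement.

Lemma card_off n (i : 'I_n.+1) : #|[pred j | j != i]| = n.
Proof. by rewrite cardC1 card_ord. Qed.

Lemma sum_off_ge n (i : 'I_n.+1) (F : 'I_n.+1 -> nat) c :
  (forall j, j != i -> c <= F j) -> n * c <= \sum_(j < n.+1 | j != i) F j.
Proof. by move=> Fc; rewrite -[X in X * c](card_off i) -sum_nat_const; apply: leq_sum. Qed.

Lemma sum_ord4 (f : 'I_4 -> nat) :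
  \sum_(b < 4) f b = f (inord 0) + f (inord 1) + f (inord 2) + f (inord 3).
Proof.
rewrite !big_ord_recl big_ord0 addn0 !addnA.
by congr (_ + _ + _ + _); apply: congr1; apply: val_inj; rewrite /= inordK.
Qed.

Lemma ord4_cases (b : 'I_4) : [\/ b = inord 0, b = inord 1, b = inord 2 | b = inord 3].
Proof.
by case: b => [[|[|[|[|k]]]] lt_b4] //;
  [apply: Or41 | apply: Or42 | apply: Or43 | apply: Or44]; apply: val_inj; rewrite /= inordK.
Qed.

(* Slice sizes at one coordinate of a 61-word code with slices of size at
   most 16: one of the profiles 16,16,16,13 / 16,16,15,14 / 16,15,15,15. *)
Section SliceProfile.

Variable f : 'I_4 -> nat.
Hypotheses (f_sum : \sum_(b < 4) f b = 61) (f_le : forall b, f b <= 16).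

Lemma profile_pair b c : b != c -> 29 <= f b + f c.
Proof.
move: f_sum; rewrite sum_ord4 => fs.
have := f_le (inord 0); have := f_le (inord 1); have := f_le (inord 2); have := f_le (inord 3).
by case: (ord4_cases b) => ->; case: (ord4_cases c) => ->; rewrite ?eqxx //; lia.
Qed.

Lemma profile_ge13 b : 13 <= f b.
Proof.
move: f_sum; rewrite sum_ord4 => fs.
have := f_le (inord 0); have := f_le (inord 1); have := f_le (inord 2); have := f_le (inord 3).
by case: (ord4_cases b) => ->; lia.
Qed.

Lemma profile_full : exists b, f b = 16.
Proof.
have [|b lt15] := @exists_gt _ f 15; first by rewrite card_ord f_sum.
by exists b; apply/eqP; rewrite eqn_leq f_le.
Qed.

End SliceProfile.

Section Code.

Variable C : {set word 4 11}.
Hypothesis hC : min_dist_ge 8 C.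

Lemma slice_min_dist i a : min_dist_ge 8 (slice C i a).
Proof. exact: min_dist_ge_sub hC (slice_sub C i a). Qed.

Lemma slice_count i a :
  #|slice C i a| * #|slice C i a| + \sum_(j < 11 | j != i) sqsum (slice C i a) j
    + slack 3 (slice C i a) = #|slice C i a| * (11 + 3 * (#|slice C i a| - 1)).
Proof.
by have := pair_count (slice_min_dist i a); rewrite (bigD1 i) //= sqsum_slice_self.
Qed.

Lemma slice_le16 i a : #|slice C i a| <= 16.
Proof.
have count := slice_count i a.
have cs : 10 * (#|slice C i a| * #|slice C i a|) <= 4 * \sum_(j < 11 | j != i) sqsum (slice C i a) j.
  by rewrite big_distrr /=; apply: sum_off_ge => j _; apply: sqsum_ge.
move: count cs; case: #|slice C i a| => [|m] //; nia.
Qed.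

Lemma large_slice_agree i a x y : 15 <= #|slice C i a| ->
  x \in slice C i a -> y \in slice C i a -> x != y -> agree x y = 3.
Proof.
move=> ge15 xU yU nxy.
have slack0 : slack 3 (slice C i a) = 0.
  have count := slice_count i a; have le16 := slice_le16 i a.
  have : 10 * (7 * #|slice C i a| - 48) <= \sum_(j < 11 | j != i) sqsum (slice C i a) j.
    by apply: sum_off_ge => j _; have := (sqsum_tangent (slice C i a) j).1; lia.
  move: count ge15 le16; case: #|slice C i a| => [|m]; nia.
have nyx : y != x by rewrite eq_sym.
have := slack_term_le 3 xU yU nyx.
by have := agree_le (slice_min_dist i a) xU yU nxy; rewrite slack0; lia.
Qed.

Lemma full_slice_split i a (j : 'I_11) b : #|slice C i a| = 16 -> j != i ->
  #|slice (slice C i a) j b| = 4.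
Proof.
move=> full nji; set U := slice C i a.
have ge64 k : 64 <= sqsum U k by have := (sqsum_tangent U k).1; rewrite full; lia.
have sq64 : sqsum U j = 64.
  apply/esym/(eq_of_sum_le (P := fun k : 'I_11 => k != i) (F := fun=> 64)) => [k _||//]; first exact: ge64.
  rewrite sum_nat_const card_off; apply: (_ : \sum_(k < 11 | k != i) sqsum U k <= 640).
  by have := slice_count i a; rewrite -/U full; lia.
have /forallP tangent : [forall c, 3 <= #|slice U j c| <= 4].
  by rewrite -(sqsum_tangent U j).2 sq64 full.
apply: (@eq_of_sum_le _ predT (fun c => #|slice U j c|) (fun=> 4)) => // [c _|].
  by have /andP [] := tangent c.
by rewrite sum_card_slice full sum_nat_const card_ord.
Qed.

Definition partnered x := [exists y in C, 0 < agree x y <= 2].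

(* A codeword outside a 16-word slice agrees 40 times in total with it; as 40
   is not a multiple of 3, some agreement is 1 or 2. *)
Lemma far_word_partnered i a x : #|slice C i a| = 16 -> x \in C -> x i != a -> partnered x.
Proof.
move=> full xC xia; set U := slice C i a.
have sum40 : \sum_(y in U) agree x y = 40.
  rewrite sum_agree_row (bigD1 i) //= slice_same (negbTE xia) cards0 add0n.
  rewrite (eq_bigr (fun=> 4)) => [|j nji]; last exact: full_slice_split.
  by rewrite sum_nat_const card_off.
apply: contraT => /exists_inPn unp.
suff : 3 %| \sum_(y in U) agree x y by rewrite sum40.
apply: dvdn_sum => y; rewrite inE => /andP [yC /eqP yia].
have nxy : x != y by apply: contraNneq xia => ->; rewrite yia.
have := unp y yC; have := agree_le hC xC yC nxy.
by case: (agree x y) => [|[|[|[|k]]]].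
Qed.

(* Slices of size at most 14, the only ones with positive slack. *)
Definition small l b := #|slice C l b| <= 14.

(* A partner pair lies in a common small slice and contributes to its slack. *)
Lemma partnered_slack x : x \in C -> partnered x ->
  0 < \sum_(l < 11) small l (x l) * slack_row 3 (slice C l (x l)) x.
Proof.
move=> xC /exists_inP [y yC /andP [agree_pos agree_le2]].
have nyx : y != x by apply: contraTneq agree_le2 => ->; rewrite agree_self.
case: (pickP (fun l => x l == y l)) => [l xyl | differ]; last first.
  by move: agree_pos; rewrite /agree big1 // => l _; rewrite differ.
have xU : x \in slice C l (x l) by rewrite inE xC eqxx.
have yU : y \in slice C l (x l) by rewrite inE yC eq_sym xyl.
have small_l : small l (x l).
  rewrite /small leqNgt; apply/negP => ge15.
  by move: nyx; rewrite eq_sym => /(large_slice_agree ge15 xU yU); lia.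
rewrite (bigD1 l) //= small_l mul1n; apply: leq_trans (leq_addr _ _).
by rewrite /slack_row (bigD1 y) /= ?yU ?nyx //; apply: leq_trans (leq_addr _ _); lia.
Qed.

Lemma partnered_le_slack :
  \sum_(x in C) partnered x <= \sum_(l < 11) \sum_(b < 4) small l b * slack 3 (slice C l b).
Proof.
apply: (@leq_trans (\sum_(x in C) \sum_(l < 11) small l (x l) * slack_row 3 (slice C l (x l)) x)).
  by apply: leq_sum => x xC; case: (boolP (partnered x)) => // /(partnered_slack xC).
rewrite exchange_big; apply/eq_leq/eq_bigr => l _ /=.
rewrite (sum_by_slice C l (fun b x => small l b * slack_row 3 (slice C l b) x)).
by apply: eq_bigr => b _; rewrite /slack big_distrr.
Qed.

Lemma slack14 l b : #|slice C l b| = 14 -> slack 3 (slice C l b) <= 4.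
Proof.
move=> size14; have := slice_count l b; rewrite size14.
have : 10 * 50 <= \sum_(j < 11 | j != l) sqsum (slice C l b) j.
  by apply: sum_off_ge => j _; have := (sqsum_tangent (slice C l b) j).1; rewrite size14; lia.
lia.
Qed.

Section Size61.

Hypothesis hC61 : #|C| = 61.

Lemma slice_total l : \sum_(b < 4) #|slice C l b| = 61.
Proof. by rewrite sum_card_slice. Qed.

(* An unpartnered word lies in a 16-word slice at every coordinate, which
   determines it. *)
Lemma unpartnered_unique x z : x \in C -> z \in C -> ~~ partnered x -> ~~ partnered z -> x = z.
Proof.
move=> xC zC px pz; apply/ffunP => l.
have [b full] := profile_full (slice_total l) (slice_le16 l).
have on_full w : w \in C -> ~~ partnered w -> w l = b.
  by move=> wC pw; apply/eqP; apply: contraNT pw; apply: far_word_partnered full wC.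
by rewrite (on_full x xC px) (on_full z zC pz).
Qed.

Lemma partnered_count : 60 <= \sum_(x in C) partnered x.
Proof.
case: (pickP [pred x in C | ~~ partnered x]) => [x0 /andP [x0C px0] | all_partnered].
  rewrite (bigD1 x0) //= (negbTE px0) add0n.
  have -> : 60 = \sum_(x in C | x != x0) 1.
    rewrite (eq_bigl (mem [predD1 C & x0])) => [|x]; last by rewrite !inE andbC.
    by rewrite sum1_card; have := cardD1 x0 C; rewrite x0C hC61 add1n => -[].
  apply: leq_sum => x /andP [xC nx]; rewrite lt0b; apply: contraR nx => px.
  by rewrite (unpartnered_unique xC x0C px px0).
apply: (@leq_trans 61) => //; rewrite -hC61 -sum1_card; apply: leq_sum => x xC.
by have := all_partnered x; rewrite /= xC /= => /negbFE ->.
Qed.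

(* A thin coordinate has the slice profile 16,16,16,13. *)
Definition thin j := [exists b, #|slice C j b| == 13].

(* A 13-word slice meets the three 16-word slices of a thin coordinate in 4
   words each, so its square count there is 1 + 3 * 16. *)
Lemma thin_sqsum l b j : #|slice C l b| = 13 -> j != l -> thin j ->
  sqsum (slice C l b) j = 49.
Proof.
move=> size13 njl /existsP [b0 /eqP thin_b0].
have g4 c : c != b0 -> #|slice (slice C l b) j c| = 4.
  move=> ncb; rewrite slice_comm full_slice_split // ?(eq_sym l) //.
  have := profile_pair (slice_total j) (slice_le16 j) ncb.
  by have := slice_le16 j c; rewrite thin_b0; lia.
have := sum_card_slice (slice C l b) j.
rewrite size13 (bigD1 b0) //= (eq_bigr (fun=> 4) g4) sum_nat_const card_off => g1.
rewrite /sqsum (bigD1 b0) //= (eq_bigr (fun=> 16)) => [|c ncb]; last by rewrite g4.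
by rewrite sum_nat_const card_off; nia.
Qed.

Lemma slack13 l b : #|slice C l b| = 13 ->
  slack 3 (slice C l b) + 6 * \sum_(j < 11 | j != l) thin j <= 12.
Proof.
move=> size13; have := slice_count l b; rewrite size13 => count.
have : \sum_(j < 11 | j != l) (43 + 6 * thin j) <= \sum_(j < 11 | j != l) sqsum (slice C l b) j.
  apply: leq_sum => j njl; case: (boolP (thin j)) => [thin_j | _].
    by rewrite (thin_sqsum size13 njl thin_j).
  by have := (sqsum_tangent (slice C l b) j).1; rewrite size13; lia.
suff -> : \sum_(j < 11 | j != l) (43 + 6 * thin j) = 430 + 6 * \sum_(j < 11 | j != l) thin j.
  by lia.
by rewrite big_split /= sum_nat_const card_off -big_distrr.
Qed.

(* Small-slice slack at a thin coordinate, where only the 13-slice is small. *)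
Lemma thin_coordinate_slack l : thin l ->
  \sum_(b < 4) small l b * slack 3 (slice C l b) + 6 * \sum_(j < 11) thin j <= 18.
Proof.
move=> thin_l; have /existsP [b0 /eqP size13] := thin_l.
rewrite (bigD1 b0) //= big1 => [|c ncb]; last first.
  have := profile_pair (slice_total l) (slice_le16 l) ncb; rewrite size13 => ge29.
  have big : 14 < #|slice C l c| by lia.
  by rewrite /small leqNgt big.
have -> : \sum_(j < 11) thin j = 1 + \sum_(j < 11 | j != l) thin j.
  by rewrite (bigD1 l) // thin_l.
by have := slack13 size13; rewrite /small size13 /= mul1n addn0; lia.
Qed.

(* Small-slice slack at any other coordinate: at most one 14-slice. *)
Lemma thick_coordinate_slack l : ~~ thin l ->
  \sum_(b < 4) small l b * slack 3 (slice C l b) <= 4.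
Proof.
move=> thick_l; case: (pickP (small l)) => [b1 small_b1 | none_small]; last first.
  by rewrite big1 // => b _; rewrite none_small.
rewrite (bigD1 b1) //= big1 => [|c ncb]; last first.
  have := profile_pair (slice_total l) (slice_le16 l) ncb; move: small_b1; rewrite /small.
  move=> le14 ge29; have big : 14 < #|slice C l c| by lia.
  by rewrite leqNgt big.
have size14 : #|slice C l b1| = 14.
  have := profile_ge13 (slice_total l) (slice_le16 l) b1; move: small_b1; rewrite /small.
  case: (#|slice C l b1| =P 13) => [size13 | ne13]; last by lia.
  by move: thick_l => /existsP []; exists b1; rewrite size13.
by rewrite small_b1 mul1n addn0 slack14.
Qed.

(* With a thin coordinates: 60 <= 18a - 6a^2 + 4(11 - a), impossible. *)
Lemma no_code61 : False.
Proof.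
set T := \sum_(l < 11) \sum_(b < 4) small l b * slack 3 (slice C l b).
set a := \sum_(l < 11) thin l.
set b := \sum_(l < 11) ~~ thin l.
have partition : a + b = 11.
  by rewrite -big_split /= -[RHS]card_ord -sum1_card; apply: eq_bigr => l _; case: (thin l).
have total : T + 6 * a * a <= 18 * a + 4 * b.
  have -> : T + 6 * a * a = \sum_(l < 11) (\sum_(b < 4) small l b * slack 3 (slice C l b) + 6 * a * thin l).
    by rewrite big_split -big_distrr.
  have -> : 18 * a + 4 * b = \sum_(l < 11) (18 * thin l + 4 * ~~ thin l).
    by rewrite big_split -!big_distrr.
  apply: leq_sum => l _; case: (boolP (thin l)) => [thin_l | thick_l].
    by have := thin_coordinate_slack thin_l; rewrite muln1 muln0 addn0.
  by rewrite muln0 addn0 muln1 thick_coordinate_slack.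
have := leq_trans partnered_count partnered_le_slack; rewrite -/T => partnered_slack_ge60.
by case: (leqP a 1) => ha; nia.
Qed.

End Size61.

End Code.

Theorem proposition5p5 : A 4 11 8 <= 60.
Proof.
apply/bigmax_leqP => C hC; rewrite leqNgt; apply/negP => /card_geqP [s [uniq_s size_s sub_s]].
pose D := [set x in s].
have hD : min_dist_ge 8 D by apply: min_dist_ge_sub hC _; apply/subsetP => x; rewrite inE => /sub_s.
by apply: (no_code61 hD); rewrite cardsE (card_uniqP uniq_s).
Qed.
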